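(* Let $s\in\{0,1\}^n$, $p\in[0,1)$, and $x\in\{0,1\}^k$ with $k\ge2$. Then $$N_x=\frac{1}{(1-p)^k}\left(E_x-\sum_{i=k+1}^{n}\sum_{y\in Y_i(x)}(-1)^{|y|-|x|+1}E_y\binom{y}{x}'\left(\frac{p}{1-p}\right)^{i-k}\right).$$
   Context: Deletion channel: a trace $\tilde S$ of $s$ is obtained by deleting each bit of $s$ independently with probability $p$. For a binary string $y$, $N_y$ is the number of positions at which $y$ occurs as a (contiguous) substring of $s$, and $E_y$ is the expected number of positions at which $y$ occurs as a substring of $\tilde S$. For a string $z$, $z[2:-2]$ is $z$ with its first and last symbols removed; $\binom{y}{z}$ is the number of ways to delete $|y|-|z|$ symbols of $y$ to obtain $z$, and $\binom{y}{z}'=\binom{y[2:-2]}{z[2:-2]}$. $Y_i(x)$ is the set of binary strings of length $i$ that are supersequences of $x$ with the same first bit and same last bit as $x$. *)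

From HB Require Import structures.
From mathcomp Require Import all_boot all_order all_algebra.
Set Implicit Arguments. Unset Strict Implicit. Unset Printing Implicit Defensive.
Import Order.TTheory GRing.Theory Num.Theory.
Local Open Scope ring_scope.

(* Binary strings are [seq bool]. A deletion pattern for s is a mask
   m : (size s).-tuple bool, with m_j = true meaning bit j is KEPT. *)

Definition occ (y t : seq bool) : nat :=
  count (fun j => prefix y (drop j t)) (iota 0 (size t).+1).

Definition Nocc (s y : seq bool) : nat := occ y s.

(* E_y : expected number of occurrences of y in the trace of s through a
   deletion channel with deletion probability p *)
Definition Eocc (R : realFieldType) (s : seq bool) (p : R) (y : seq bool) : R :=
  \sum_(m : (size s).-tuple bool)
     (1 - p) ^+ (count id m) * p ^+ (size s - count id m)
       * (occ y (mask m s))%:R.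

Definition binom (y z : seq bool) : nat :=
  #|[set m : (size y).-tuple bool | mask m y == z]|.

Definition inner (z : seq bool) : seq bool := take (size z).-2 (behead z).

Definition binom' (y z : seq bool) : nat := binom (inner y) (inner z).

(* membership in Y_i(x) for y of length i *)
Definition inY (x y : seq bool) : bool :=
  [&& subseq x y, head false y == head false x & last false y == last false x].

From HB Require Import structures.
From mathcomp Require Import all_boot all_order all_algebra.
From mathcomp Require Import ring.
Set Implicit Arguments. Unset Strict Implicit. Unset Printing Implicit Defensive.
Import Order.TTheory GRing.Theory Num.Theory.

(* Put c = -p/(1-p) and, for a pattern q, D(q, t) = sum_j c^(j-|q|) e(q, t[0..j)),
   where e(q, w) counts the embeddings of q into w that use the last letter of w.
   Conditioning on the first bit of s gives E[D(b::q, trace)] =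
   (1-p) [s_0 = b] E[D(q, .)] + ((1-p) c + p) E[D(b::q, .)], and the choice of c
   kills the second term: E[D(q, trace)] = (1-p)^|q| [q is a prefix of s].
   A string y in Y(x) read from the first letter of t contributes binom'(y,x)
   embeddings of the interior of x, so G(t) = sum_(y in Y(x)) c^(|y|-|x|)
   binom'(y,x) occ(y,t) satisfies G(b::t) = [b = x_0] D(x[1:], t) + G(t), and
   induction on s gives E[G(trace)] = (1-p)^|x| N_x.  Expanding E[G] by
   linearity gives the formula, the term y = x being E_x. *)

Lemma big_tuple_cons (R : Type) (idx : R) (op : Monoid.com_law idx)
    (T : finType) n (F : n.+1.-tuple T -> R) :
  \big[op/idx]_(m : n.+1.-tuple T) F m =
  \big[op/idx]_(b : T) \big[op/idx]_(m : n.-tuple T) F [tuple of b :: m].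
Proof.
rewrite pair_big /=.
pose cons_tuple (bm : T * n.-tuple T) := [tuple of bm.1 :: bm.2].
pose uncons_tuple (m : n.+1.-tuple T) := (thead m, [tuple of behead m]).
have consK : cancel cons_tuple uncons_tuple.
  by move=> [b m]; rewrite /uncons_tuple /thead tnth0; congr (_, _); apply: val_inj.
have unconsK : cancel uncons_tuple cons_tuple.
  by move=> m; apply: val_inj; rewrite /= [in RHS](tuple_eta m).
by rewrite (reindex cons_tuple) //; exact: onW_bij (Bijective consK unconsK).
Qed.

Lemma big_tuple_nil (R : Type) (idx : R) (op : Monoid.com_law idx)
    (T : finType) (F : 0.-tuple T -> R) :
  \big[op/idx]_(m : 0.-tuple T) F m = F [tuple].
Proof. by rewrite (big_pred1 [tuple]) // => m; rewrite [m]tuple0 /= eqxx. Qed.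

Fixpoint nsubseq (u v : seq bool) : nat :=
  match u with
  | [::] => v == [::]
  | a :: u' => nsubseq u' v + if v is b :: v' then (a == b) * nsubseq u' v' else 0
  end.

Lemma sum_mask_eq n u v : size u = n ->
  \sum_(m : n.-tuple bool) (mask m u == v) = nsubseq u v.
Proof.
elim: n u v => [|n IHn] [|a u] v //=; first by rewrite big_tuple_nil /= eq_sym.
case=> size_u; rewrite big_tuple_cons big_bool /= addnC -!(IHn u) //; congr (_ + _)%N.
case: v => [|b v]; first by rewrite big1.
rewrite -(IHn u v) // big_distrr /=.
by apply: eq_bigr => m _; rewrite eqseq_cons; case: (a == b); rewrite ?mul1n.
Qed.

Lemma binomE u v : binom u v = nsubseq u v.
Proof.
rewrite /binom -sum1_card big_mkcond /= -(sum_mask_eq v (erefl (size u))).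
by apply: eq_bigr => m _; rewrite inE; case: eqP.
Qed.

Lemma nsubseq_small u v : size u < size v -> nsubseq u v = 0.
Proof.
elim: u v => [|a u IHu] [|b v] //= lt_uv.
by rewrite !IHu ?muln0 // (ltn_trans _ lt_uv).
Qed.

Lemma nsubseqnn u : nsubseq u u = 1.
Proof. by elim: u => [|a u IHu] //=; rewrite nsubseq_small // eqxx IHu. Qed.

Lemma nsubseq_gt0_subseq u v : 0 < nsubseq u v -> subseq v u.
Proof.
elim: u v => [|a u IHu] [|b v] //=; rewrite ?sub0seq // addn_gt0.
case/orP=> [/IHu sub_vu|]; first exact: subseq_trans sub_vu (subseq_cons u a).
by case: eqP => [->|] //; rewrite mul1n eqxx => /IHu.
Qed.

(* Embeddings of q into w that use the last letter of w. *)
Fixpoint nsubseq_end (q w : seq bool) : nat :=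
  match w, q with
  | [::], _ => q == [::]
  | _ :: _, [::] => 0
  | a :: w', b :: q' => (a == b) * nsubseq_end q' w' + nsubseq_end q w'
  end.

Lemma nsubseq_end_small q w : size w < size q -> nsubseq_end q w = 0.
Proof.
elim: w q => [|a w IHw] [|b q] //= lt_wq.
by rewrite !IHw ?muln0 // (ltn_trans _ lt_wq).
Qed.

Lemma nsubseq_end_rcons q b w a :
  nsubseq_end (rcons q b) (rcons w a) = (a == b) * nsubseq w q.
Proof.
elim: w q => [|c w IHw] [|d q] /=.
- by rewrite muln1 addn0.
- by case: q => [|? ?]; rewrite /= !muln0.
- have -> : nsubseq_end [::] (rcons w a) = 0 by case: (w).
  by rewrite (IHw [::]) /= muln0 add0n addn0.
- by rewrite IHw (IHw (d :: q)) /= mulnDr addnC mulnCA.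
Qed.

Lemma inner_rcons a z b : inner (a :: rcons z b) = z.
Proof. by rewrite /inner /= size_rcons /= -cats1 take_size_cat. Qed.

Lemma inY_binom'_cons x b w : 2 <= size x ->
  inY x (b :: w) * binom' (b :: w) x = (b == head false x) * nsubseq_end (behead x) w.
Proof.
case: x => [|a x] //; case/lastP: x => [|z c] //= _.
case/lastP: w => [|w d].
  rewrite nsubseq_end_small ?size_rcons // muln0.
  suff -> : inY (a :: rcons z c) [:: b] = false by [].
  by apply/negbTE/negP => /and3P [/size_subseq]; rewrite /= size_rcons.
rewrite /binom' -rcons_cons !inner_rcons binomE nsubseq_end_rcons /inY /= !last_rcons.
case: (b =P a) => [->|]; case: (d =P c) => [->|]; rewrite ?andbF ?mul0n //=.
have [->|nsub_gt0] := posnP (nsubseq w z); first by rewrite !muln0.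
by rewrite eqxx -!cats1 cat_subseq ?(nsubseq_gt0_subseq nsub_gt0) // !mul1n.
Qed.

Lemma occ_cons y b t : occ y (b :: t) = prefix y (b :: t) + occ y t.
Proof.
rewrite {1}/occ.
have -> : iota 0 (size (b :: t)).+1 = 0 :: map (addn 1) (iota 0 (size t).+1).
  by rewrite -iotaDl.
rewrite -(cat1s 0) count_cat count_map; congr (_ + _).
by rewrite /= addn0.
Qed.

Lemma occ_small y t : size t < size y -> occ y t = 0.
Proof.
move=> lt_ty; apply/eqP; rewrite -leqn0 leqNgt -has_count; apply/hasPn => j _.
apply/negP => /size_prefix; rewrite size_drop => le_y.
by have := leq_trans le_y (leq_subr _ _); rewrite leqNgt lt_ty.
Qed.

Local Open Scope ring_scope.

Section TraceExpectation.

Variables (R : comPzRingType) (p : R).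

Definition expect_trace (s : seq bool) (F : seq bool -> R) : R :=
  \sum_(m : (size s).-tuple bool)
     (1 - p) ^+ count id m * p ^+ (size s - count id m) * F (mask m s).

Lemma expect_trace_nil F : expect_trace [::] F = F [::].
Proof. by rewrite /expect_trace big_tuple_nil /= expr0 !mul1r. Qed.

Lemma expect_trace_cons a s F :
  expect_trace (a :: s) F =
  (1 - p) * expect_trace s (fun t => F (a :: t)) + p * expect_trace s F.
Proof.
rewrite /expect_trace /= big_tuple_cons big_bool /= !mulr_sumr.
congr (_ + _); apply: eq_bigr => m _ /=.
  by rewrite add1n subSS exprS !mulrA; congr (_ * _ * _); rewrite mulrC.
have m_le : (count id m <= size s)%N by rewrite -{2}(size_tuple m) count_size.
by rewrite add0n subSn // exprS mulrCA !mulrA.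
Qed.

Lemma eq_in_expect_trace s F G :
  {in [pred t : seq bool | size t <= size s]%N, F =1 G} ->
  expect_trace s F = expect_trace s G.
Proof.
move=> eqFG; apply: eq_bigr => m _; rewrite eqFG // inE.
exact: size_subseq (mask_subseq _ _).
Qed.

Lemma eq_expect_trace s F G : F =1 G -> expect_trace s F = expect_trace s G.
Proof. by move=> eqFG; apply: eq_in_expect_trace => t _; apply: eqFG. Qed.

Lemma expect_traceD s F G :
  expect_trace s (fun t => F t + G t) = expect_trace s F + expect_trace s G.
Proof. by rewrite /expect_trace -big_split; apply: eq_bigr => m _; rewrite mulrDr. Qed.

Lemma expect_traceZ s u F :
  expect_trace s (fun t => u * F t) = u * expect_trace s F.
Proof. by rewrite /expect_trace mulr_sumr; apply: eq_bigr => m _; rewrite mulrCA. Qed.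

Lemma expect_trace_cst s u : expect_trace s (fun _ => u) = u.
Proof.
elim: s => [|a s IHs]; first by rewrite expect_trace_nil.
by rewrite expect_trace_cons IHs -mulrDl subrK mul1r.
Qed.

End TraceExpectation.

Lemma EoccE (R : realFieldType) (s : seq bool) (p : R) y :
  Eocc s p y = expect_trace p s (fun t => (occ y t)%:R).
Proof. by []. Qed.

Lemma Eocc_small (R : realFieldType) (s : seq bool) (p : R) y :
  (size s < size y)%N -> Eocc s p y = 0.
Proof.
move=> lt_sy; rewrite EoccE (@eq_in_expect_trace _ _ _ _ (fun=> 0)) ?expect_trace_cst //.
by move=> t; rewrite inE => le_ts; rewrite occ_small // (leq_ltn_trans le_ts).
Qed.

Section PrefixEstimator.

Variables (R : comPzRingType) (c : R).

Fixpoint prefix_estimator (q t : seq bool) : R :=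
  match t, q with
  | [::], _ => (q == [::])%:R
  | _ :: _, [::] => 1
  | a :: t', b :: q' =>
      (a == b)%:R * prefix_estimator q' t' + c * prefix_estimator q t'
  end.

Lemma prefix_estimatorE q t : prefix_estimator q t =
  \sum_(j < (size t).+1) c ^+ (j - size q) * (nsubseq_end q (take j t))%:R.
Proof.
elim: t q => [|a t IHt] q; first by rewrite big_ord1 take0 expr0 mul1r.
rewrite big_ord_recl take0 expr0 mul1r /=.
case: q => [|b q] /=.
  by rewrite big1 ?addr0 // => j _; rewrite mulr0.
rewrite add0r (IHt q) (IHt (b :: q)) !mulr_sumr -big_split /=.
apply: eq_bigr => j _; rewrite /bump /= add1n subSS natrD natrM mulrDr.
congr (_ + _); first by rewrite mulrCA.
have [lt_jq|le_qj] := ltnP j (size q).+1.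
  by rewrite nsubseq_end_small ?mulr0 // size_take_min (leq_ltn_trans (geq_minl _ _)).
by rewrite mulrA -exprS subnSK // add0n.
Qed.

End PrefixEstimator.

Lemma expect_prefix_estimator (K : fieldType) (p : K) q s : p != 1 ->
  expect_trace p s (prefix_estimator (- (p / (1 - p))) q) =
  (1 - p) ^+ size q * (prefix q s)%:R.
Proof.
move=> p_neq1; have q_neq0 : 1 - p != 0 by rewrite subr_eq0 eq_sym.
elim: s q => [|a s IHs] [|b q]; rewrite ?expect_trace_nil ?expr0 ?mul1r ?mulr0 //.
  rewrite expect_trace_cons !(@eq_expect_trace _ _ _ _ (fun=> 1)) ?expect_trace_cst //.
  - by rewrite !mulr1 subrK.
  - by case.
rewrite expect_trace_cons /= expect_traceD !expect_traceZ !IHs /= -mulnb natrM eq_sym.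
by rewrite exprS; field.
Qed.

Lemma expect_trace_sum (R : comPzRingType) (p : R) (I : Type) (r : seq I)
    (P : pred I) (F : I -> seq bool -> R) s :
  expect_trace p s (fun t => \sum_(i <- r | P i) F i t) =
  \sum_(i <- r | P i) expect_trace p s (F i).
Proof.
rewrite /expect_trace exchange_big /=; apply: eq_bigr => m _.
by rewrite mulr_sumr.
Qed.

Lemma sum_tuple_prefix (R : comPzRingType) i u (P : pred (seq bool)) (f : seq bool -> R) :
  \sum_(y : i.-tuple bool | P y) f y * (prefix y u)%:R =
  ((i <= size u)%N && P (take i u))%:R * f (take i u).
Proof.
under eq_bigr => y _ do rewrite prefixE size_tuple.
have [le_iu|lt_ui] /= := leqP i (size u); last first.
  rewrite mul0r big1 => // y _; rewrite take_oversize; last exact: ltnW.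
  case: eqP => [u_eq|]; last by rewrite mulr0.
  by move: lt_ui; rewrite u_eq size_tuple ltnn.
have size_take_u : size (take i u) == i by rewrite size_takel.
rewrite big_mkcond (bigD1 (Tuple size_take_u)) => //.
rewrite big1 => [|y /andP [_ neq_y]].
  by rewrite /= addr0 eqxx mulr1; case: (P _); rewrite ?mul1r ?mul0r.
case: (P y); last by [].
by rewrite -[take i u]/(val (Tuple size_take_u)) val_eqE eq_sym (negPf neq_y) mulr0.
Qed.

Section SumOverY.

Variables (R : comPzRingType) (c : R) (x : seq bool) (M : nat).

Definition sumY (f : seq bool -> R) : R :=
  \sum_(i < M.+1) c ^+ (i - size x) *
    \sum_(y : i.-tuple bool | inY x y) (binom' y x)%:R * f y.

Lemma sumYD f g : sumY (fun y => f y + g y) = sumY f + sumY g.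
Proof.
rewrite /sumY -big_split; apply: eq_bigr => i _ /=; rewrite -mulrDr -big_split.
by congr (_ * _); apply: eq_bigr => y _; rewrite mulrDr.
Qed.

Lemma expect_trace_sumY (p : R) s (F : seq bool -> seq bool -> R) :
  expect_trace p s (fun t => sumY (F^~ t)) = sumY (fun y => expect_trace p s (F y)).
Proof.
rewrite expect_trace_sum; apply: eq_bigr => i _.
rewrite expect_traceZ expect_trace_sum; congr (_ * _).
by apply: eq_bigr => y _; rewrite expect_traceZ.
Qed.

Lemma sumY_eq0 f : {in inY x, f =1 (fun=> 0)} -> sumY f = 0.
Proof.
move=> f0; rewrite /sumY big1 // => i _; rewrite big1 ?mulr0 // => y inY_y.
by rewrite f0 ?mulr0.
Qed.

Lemma eq_sumY f g : f =1 g -> sumY f = sumY g.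
Proof.
move=> eq_fg; apply: eq_bigr => i _; congr (_ * _).
by apply: eq_bigr => y _; rewrite eq_fg.
Qed.

Lemma sumYE f : (size x <= M)%N ->
  sumY f = f x + \sum_((size x).+1 <= i < M.+1) c ^+ (i - size x) *
                   \sum_(y : i.-tuple bool | inY x y) (binom' y x)%:R * f y.
Proof.
move=> le_xM.
pose T i := c ^+ (i - size x) * \sum_(y : i.-tuple bool | inY x y) (binom' y x)%:R * f y.
have T_small i : (i < size x)%N -> T i = 0.
  move=> lt_ix; rewrite /T big1 ?mulr0 // => y /and3P [/size_subseq].
  by rewrite size_tuple leqNgt lt_ix.
have T_size : T (size x) = f x.
  have size_x : size x == size x by [].
  rewrite /T subnn expr0 mul1r (bigD1 (Tuple size_x)) /=; last first.
    by rewrite /inY subseq_refl !eqxx.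
  rewrite /binom' binomE nsubseqnn mul1r big1 ?addr0 // => y /andP [/and3P [sub_xy _ _]].
  have [_ /esym/eqP] := size_subseq_leqif sub_xy.
  by rewrite size_tuple eqxx => x_eq_y /eqP []; apply: val_inj.
rewrite /sumY -(big_mkord xpredT T) (big_cat_nat (n := size x)) ?leqW //=.
rewrite big1_seq => [|i /andP [_]]; last by rewrite mem_index_iota => /T_small.
by rewrite add0r big_ltn ?ltnS // T_size.
Qed.

Hypothesis x_ge2 : (2 <= size x)%N.

Lemma sumY_prefix_cons b t : (size t < M)%N ->
  sumY (fun y => (prefix y (b :: t))%:R) =
  (b == head false x)%:R * prefix_estimator c (behead x) t.
Proof.
move=> lt_tM; have size_x : size x = (size (behead x)).+1 by case: (x) x_ge2.
have inY_nil : inY x [::] = false by case: (x) x_ge2.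
rewrite /sumY; under eq_bigr => i _ do
  rewrite (sum_tuple_prefix _ _ (inY x) (fun y => (binom' y x)%:R)).
rewrite big_ord_recl take0 inY_nil andbF mul0r mulr0 add0r.
pose F j := c ^+ (j - size (behead x)) * (nsubseq_end (behead x) (take j t))%:R.
rewrite prefix_estimatorE (big_ord_widen M F lt_tM) mulr_sumr [RHS]big_mkcond.
apply: eq_bigr => j _; rewrite /bump /= add0n ltnS size_x subSS /F.
case: (j <= size t)%N; last by rewrite mul0r mulr0.
by rewrite -natrM inY_binom'_cons // natrM mulrCA.
Qed.

Lemma sumY_occ_cons b t : (size t < M)%N ->
  sumY (fun y => (occ y (b :: t))%:R) =
  (b == head false x)%:R * prefix_estimator c (behead x) t + sumY (fun y => (occ y t)%:R).
Proof.
move=> lt_tM; rewrite -sumY_prefix_cons // -sumYD.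
by apply: eq_sumY => y; rewrite occ_cons natrD.
Qed.

End SumOverY.

Lemma expect_sumY_occ (K : fieldType) (p : K) x M s :
  p != 1 -> (2 <= size x)%N -> (size s <= M)%N ->
  expect_trace p s (fun t => sumY (- (p / (1 - p))) x M (fun y => (occ y t)%:R)) =
  (1 - p) ^+ size x * (occ x s)%:R.
Proof.
move=> p_neq1 x_ge2; elim: s => [|a s IHs] le_sM.
  rewrite expect_trace_nil (@occ_small x [::] (ltnW x_ge2)) mulr0 sumY_eq0 // => y.
  case/and3P=> /size_subseq le_xy _ _.
  by rewrite occ_small // (leq_trans (ltnW x_ge2) le_xy).
case: x x_ge2 IHs => [|x0 x'] x_ge2 IHs; first by [].
rewrite expect_trace_cons (@eq_in_expect_trace _ _ _ _ (fun t =>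
  (a == x0)%:R * prefix_estimator (- (p / (1 - p))) x' t +
  sumY (- (p / (1 - p))) (x0 :: x') M (fun y => (occ y t)%:R))); last first.
  move=> t; rewrite inE => le_ts.
  exact: sumY_occ_cons x_ge2 _ _ (leq_ltn_trans le_ts le_sM).
rewrite expect_traceD expect_traceZ expect_prefix_estimator // IHs; last exact: ltnW.
rewrite occ_cons natrD /= -mulnb natrM eq_sym exprS.
by ring.
Qed.

Unset Implicit Arguments.

Theorem lemma4 (R : realFieldType) (s : seq bool) (p : R) (x : seq bool) :
  0 <= p -> p < 1 -> (2 <= size x)%N ->
  (Nocc s x)%:R =
    ((1 - p) ^+ (size x))^-1 *
    (Eocc s p x -
     \sum_((size x).+1 <= i < (size s).+1)
       \sum_(y : i.-tuple bool | inY x y)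
         (-1) ^+ (i - size x + 1) * Eocc s p y * (binom' y x)%:R
           * (p / (1 - p)) ^+ (i - size x)).
Proof.
move=> p_ge0 p_lt1 x_ge2.
have p_neq1 : p != 1 by rewrite lt_eqF.
have q_neq0 : (1 - p) ^+ size x != 0 by rewrite expf_neq0 // subr_eq0 eq_sym.
rewrite /Nocc; have [s_lt_x|x_le_s] := ltnP (size s) (size x).
  have le_sx : (size s <= size x)%N := ltnW s_lt_x.
  by rewrite occ_small ?Eocc_small ?big_geq ?subrr ?mulr0.
rewrite -[LHS](mulKf q_neq0) -(expect_sumY_occ p_neq1 x_ge2 (leqnn (size s))).
rewrite expect_trace_sumY (sumYE _ _ x_le_s) -EoccE; congr (_ * (_ + _)).
rewrite -sumrN; apply: eq_bigr => i _; rewrite mulr_sumr -sumrN.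
apply: eq_bigr => y _; rewrite -EoccE addn1 exprS (exprNn (p / (1 - p))).
by move: ((-1) ^+ _) ((p / (1 - p)) ^+ _) => sgn r; ring.
Qed.
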